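(* Let $A=(a_{ij})\in\overline{\mathbb{R}}^{n\times n}$. Then $A$ is pseudo-diagonalizable if and only if $A$ is finite and for all $i,j,k\in[n]$ with $k\neq i$ and $k\neq j$, $$a_{ik}+a_{kj}=\begin{cases} a_{ij} & \text{if } i\neq j,\\ 0 & \text{if } i=j.\end{cases}$$
   Context: Max-plus semiring: $\overline{\mathbb{R}}=\mathbb{R}\cup\{-\infty\}$ with $a\oplus b=\max\{a,b\}$, $a\otimes b=a+b$, $\varepsilon=-\infty$. Matrix operations: $(A\oplus B)_{ij}=\max(A_{ij},B_{ij})$, $(A\otimes B)_{ij}=\max_k(A_{ik}+B_{kj})$. $[n]=\{1,\dots,n\}$. A matrix is finite if all its entries are real. $I$ denotes the $n\times n$ matrix with $0$ on the diagonal and $\varepsilon$ elsewhere; $P\in\overline{\mathbb{R}}^{n\times n}$ is invertible if there is $Q$ with $P\otimes Q=Q\otimes P=I$ (equivalently, $P$ is a generalized permutation matrix: exactly one real entry in each row and each column, all other entries $\varepsilon$). Matrices $A,B\in\overline{\mathbb{R}}^{n\times n}$ are similar if $B=P^{-1}\otimes A\otimes P$ for some invertible $P$. A square matrix is pseudo-diagonal if its diagonal entries are real numbers and all its off-diagonal entries equal the real number $0$; $\mathrm{pdiag}(d_1,\dots,d_n)$ denotes the pseudo-diagonal matrix with diagonal entries $d_1,\dots,d_n$. A square matrix is pseudo-diagonalizable if it is similar to a pseudo-diagonal matrix. *)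

(* Max-plus semiring over R : realType, with
   -oo represented by None and a real number r by Some r. *)
From HB Require Import structures.
From mathcomp Require Import all_boot all_order all_algebra.
From mathcomp Require Import reals.
Set Implicit Arguments. Unset Strict Implicit. Unset Printing Implicit Defensive.
Import Order.TTheory GRing.Theory Num.Theory.
Local Open Scope ring_scope.

Section MaxPlus.
Variable R : realType.

Definition mpR := option R.

Definition mp_add (a b : mpR) : mpR :=
  match a, b with
  | None, _ => b
  | _, None => a
  | Some x, Some y => Some (Num.max x y)
  end.

Definition mp_mul (a b : mpR) : mpR :=
  match a, b with
  | Some x, Some y => Some (x + y)
  | _, _ => None
  end.

Definition mp_mulmx (n : nat) (A B : 'M[mpR]_n) : 'M[mpR]_n :=
  \matrix_(i, j) \big[mp_add/None]_(k < n) mp_mul (A i k) (B k j).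

Definition mp_id (n : nat) : 'M[mpR]_n :=
  \matrix_(i, j) if i == j then Some 0 else None.

Definition mp_inverse (n : nat) (P Q : 'M[mpR]_n) : Prop :=
  mp_mulmx P Q = mp_id n /\ mp_mulmx Q P = mp_id n.

Definition mp_similar (n : nat) (A B : 'M[mpR]_n) : Prop :=
  exists P Q : 'M[mpR]_n, mp_inverse P Q /\ B = mp_mulmx (mp_mulmx Q A) P.

Definition mp_finite (n : nat) (A : 'M[mpR]_n) : Prop :=
  forall i j, A i j <> None.

Definition pseudo_diagonal (n : nat) (A : 'M[mpR]_n) : Prop :=
  (forall i, A i i <> None) /\ (forall i j, i != j -> A i j = Some 0).

Definition pseudo_diagonalizable (n : nat) (A : 'M[mpR]_n) : Prop :=
  exists B : 'M[mpR]_n, pseudo_diagonal B /\ mp_similar A B.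

End MaxPlus.

(** Every row and every column of an invertible max-plus matrix [P] (with inverse [Q])
    holds exactly one real entry, say [p_u] at [(u, s u)] with [s] injective, and then
    [Q (s u) u = - p_u].  Hence [(Q (x) A (x) P) (s u) (s v) = a_uv - p_u + p_v], so [A]
    is pseudo-diagonalizable iff it is finite and its off-diagonal entries are of the form
    [d_u - d_v].  Such a potential [d] exists iff the cocycle condition holds: take
    [d_u = a_{u i0}] for a base point [i0] (and [d_{i0} = 0]). *)
From HB Require Import structures.
From mathcomp Require Import all_boot all_order all_algebra.
From mathcomp Require Import reals.
From mathcomp Require Import lra.
Import Order.TTheory GRing.Theory Num.Theory.
Local Open Scope ring_scope.
Set Implicit Arguments. Unset Strict Implicit.

Section MaxPlusSum.
Variable R : realType.
Implicit Types a b : mpR R.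

Lemma mp_addA : associative (@mp_add R).
Proof. by case=> [x|] [y|] [z|] //=; rewrite maxA. Qed.

Lemma mp_addC : commutative (@mp_add R).
Proof. by case=> [x|] [y|] //=; rewrite maxC. Qed.

Lemma mp_add0l : left_id None (@mp_add R).
Proof. by case. Qed.

HB.instance Definition _ :=
  Monoid.isComLaw.Build (mpR R) None (@mp_add R) mp_addA mp_addC mp_add0l.

Lemma mp_add_eq0 a b : mp_add a b = None -> a = None /\ b = None.
Proof. by case: a b => [x|] [y|]. Qed.

Lemma mp_mulr0 a : mp_mul a None = None.
Proof. by case: a. Qed.

Variable n : nat.
Implicit Types F : 'I_n -> mpR R.

Lemma mp_big_eq0 F k : \big[@mp_add R/None]_(l < n) F l = None -> F k = None.
Proof. by rewrite (bigD1 k) //= => /mp_add_eq0 []. Qed.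

Lemma mp_big_neq0 F : \big[@mp_add R/None]_(l < n) F l <> None -> exists k, F k <> None.
Proof.
move=> Fneq0; have [k /eqP|F0] := pickP (fun k => F k != None); first by exists k.
by case: Fneq0; apply: big1 => k _; apply/eqP/negbFE.
Qed.

Lemma mp_big_single F k : (forall l, l != k -> F l = None) ->
  \big[@mp_add R/None]_(l < n) F l = F k.
Proof.
move=> F0; rewrite (bigD1 k) //= big1 => [|l /F0 //].
by case: (F k).
Qed.

Lemma mp_mulmx_row_single (X Y : 'M[mpR R]_n) i j k :
  (forall l, l != k -> X i l = None) -> mp_mulmx X Y i j = mp_mul (X i k) (Y k j).
Proof. by move=> X0; rewrite mxE (mp_big_single (k := k)) // => l /X0 ->. Qed.

Lemma mp_mulmx_col_single (X Y : 'M[mpR R]_n) i j k :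
  (forall l, l != k -> Y l j = None) -> mp_mulmx X Y i j = mp_mul (X i k) (Y k j).
Proof. by move=> Y0; rewrite mxE (mp_big_single (k := k)) // => l /Y0 ->; rewrite mp_mulr0. Qed.

End MaxPlusSum.

Section MaxPlusInverse.
Variables (R : realType) (n : nat).
Implicit Types X Y P Q A : 'M[mpR R]_n.

Lemma mp_mulmx_id_diag X Y i : mp_mulmx X Y = mp_id R n ->
  exists k, X i k <> None /\ Y k i <> None.
Proof.
move=> /(congr1 (fun M : 'M_n => M i i)); rewrite !mxE eqxx => XYii.
have [|k XYk] := mp_big_neq0 (F := fun k => mp_mul (X i k) (Y k i)); first by rewrite XYii.
by exists k; case: (X i k) (Y k i) XYk => [x|] [y|].
Qed.

Lemma mp_mulmx_id_offdiag X Y i j k : mp_mulmx X Y = mp_id R n ->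
  X i k <> None -> j != i -> Y k j = None.
Proof.
move=> /(congr1 (fun M : 'M_n => M i j)); rewrite !mxE eq_sym => XYij Xik /negbTE ji.
by move: XYij; rewrite ji => /(mp_big_eq0 k); case: (X i k) Xik (Y k j) => // x _ [].
Qed.

Section InverseMatrix.
Variables P Q : 'M[mpR R]_n.
Hypothesis PQ : mp_inverse P Q.

Lemma mp_inverse_row_real u : exists j, P u j <> None.
Proof. by have [j [? _]] := mp_mulmx_id_diag u PQ.1; exists j. Qed.

Lemma mp_inverse_col_unique u v j : P u j <> None -> P v j <> None -> u = v.
Proof.
have [l [Qjl Plj]] := mp_mulmx_id_diag j PQ.2.
have l_unique w : P w j <> None -> w = l.
  move=> Pwj; case: (eqVneq w l) => // wl; case: Qjl.
  by apply: (mp_mulmx_id_offdiag PQ.1 Pwj); rewrite eq_sym.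
by move=> /l_unique -> /l_unique ->.
Qed.

Lemma mp_inverse_conj_entry A u v i j p q : P u i = Some p -> P v j = Some q ->
  mp_mulmx (mp_mulmx Q A) P i j = omap (fun a => a - p + q) (A u v).
Proof.
move=> Pui Pvj.
have Qi0 l : l != u -> Q i l = None.
  by apply: (mp_mulmx_id_offdiag PQ.1); rewrite Pui.
have Pj0 l : l != v -> P l j = None.
  move=> lv; case Plj: (P l j) => [x|] //; case/eqP: lv.
  by apply: (mp_inverse_col_unique (j := j)); rewrite ?Plj ?Pvj.
have QPii : mp_mul (Q i u) (P u i) = Some 0.
  have := congr1 (fun M : 'M_n => M i i) PQ.2.
  by rewrite !mxE eqxx (mp_big_single (k := u)) => // l /Qi0 ->.
rewrite (mp_mulmx_col_single _ _ Pj0) (mp_mulmx_row_single _ _ Qi0) Pvj.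
move: QPii; rewrite Pui; case: (Q i u) => // x [Qiu]; case: (A u v) => //= a.
by congr Some; lra.
Qed.

End InverseMatrix.

Definition mp_diag (d : 'I_n -> R) : 'M[mpR R]_n :=
  \matrix_(i, j) if i == j then Some (d i) else None.

Lemma mp_diag_inverse d : mp_inverse (mp_diag d) (mp_diag (fun i => - d i)).
Proof.
have diag0 e i l : l != i -> mp_diag e i l = None by rewrite mxE eq_sym => /negbTE ->.
split; apply/matrixP => i j; rewrite (mp_mulmx_row_single _ _ (diag0 _ i)) !mxE eqxx;
  by case: eqVneq => //= _; rewrite ?subrr ?addNr.
Qed.

End MaxPlusInverse.

Section PseudoDiagonalizable.
Variables (R : realType) (n : nat).
Implicit Types A : 'M[mpR R]_n.

Definition offdiag_potential A :=
  exists d : 'I_n -> R, forall i j, i != j -> A i j = Some (d i - d j).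

Definition mp_cocycle A :=
  forall i j k : 'I_n, k != i -> k != j ->
    mp_mul (A i k) (A k j) = (if i != j then A i j else Some 0).

Lemma pseudo_diagonalizable_potential A :
  pseudo_diagonalizable A -> mp_finite A /\ offdiag_potential A.
Proof.
move=> [B [[Bdiag Boff] [P [Q [PQ EB]]]]].
have Breal i j : B i j <> None.
  by case: (eqVneq i j) => [<-|/Boff ->] //; apply: Bdiag.
have /fin_all_exists [s Ps] u : exists jp : 'I_n * R, P u jp.1 = Some jp.2.
  have [j] := mp_inverse_row_real PQ u.
  by case Puj: (P u j) => [p|] // _; exists (j, p).
have Bconj u v : B (s u).1 (s v).1 = omap (fun a => a - (s u).2 + (s v).2) (A u v).
  by rewrite EB (mp_inverse_conj_entry PQ A (Ps u) (Ps v)).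
split=> [u v|].
  by have := Breal (s u).1 (s v).1; rewrite Bconj; case: (A u v).
exists (fun u => (s u).2) => u v uv.
have suv : (s u).1 != (s v).1.
  apply: contra_neq uv => s_eq.
  by apply: (mp_inverse_col_unique PQ (j := (s v).1)); first rewrite -s_eq; rewrite Ps.
have := Bconj u v; rewrite Boff //; case: (A u v) => //= a [a_eq].
by congr Some; lra.
Qed.

Lemma potential_pseudo_diagonalizable A :
  mp_finite A -> offdiag_potential A -> pseudo_diagonalizable A.
Proof.
move=> Afin [d Ad]; have dd := mp_diag_inverse d.
have dii i : mp_diag d i i = Some (d i) by rewrite mxE eqxx.
have Bconj i j := mp_inverse_conj_entry dd A (dii i) (dii j).
eexists; split; last by exists (mp_diag d), (mp_diag (fun i => - d i)).
split=> [i|i j ij]; rewrite Bconj //; first by case: (A i i) (Afin i i).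
by rewrite Ad //=; congr Some; lra.
Qed.

Lemma potential_cocycle A : offdiag_potential A -> mp_cocycle A.
Proof.
move=> [d Ad] i j k ki kj; rewrite (Ad i k) 1?eq_sym // (Ad k j) //=.
case: eqVneq => [->|ji] /=; first by congr Some; lra.
by rewrite Ad 1?eq_sym //; congr Some; lra.
Qed.

Lemma finite_cocycle_potential A :
  mp_finite A -> mp_cocycle A -> offdiag_potential A.
Proof.
move=> Afin Acoc; pose a i j := odflt 0 (A i j).
have Aa i j : A i j = Some (a i j) by rewrite /a; case: (A i j) (Afin i j).
have [i0 _|n0] := pickP (@predT 'I_n); last by exists (fun=> 0) => i; have := n0 i.
have a_anti i : i != i0 -> a i i0 + a i0 i = 0.
  by move=> ii0; have := Acoc i i i0; rewrite eq_sym ii0 eqxx !Aa => /(_ isT isT) [].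
exists (fun i => if i == i0 then 0 else a i i0) => i j ij; rewrite Aa; congr Some.
case: (eqVneq i i0) => [ii0|ii0]; case: (eqVneq j i0) => [ji0|ji0].
- by move: ij; rewrite ii0 ji0 eqxx.
- by subst i; have := a_anti j ji0; lra.
- by subst j; lra.
- have := Acoc i j i0; rewrite ij !Aa !(eq_sym i0) ii0 ji0 => /(_ isT isT) [].
  by have := a_anti j ji0; lra.
Qed.

End PseudoDiagonalizable.

Theorem theorem3p3 (R : realType) (n : nat) (A : 'M[mpR R]_n) :
  pseudo_diagonalizable A <->
  (mp_finite A /\
   forall i j k : 'I_n, k != i -> k != j ->
     mp_mul (A i k) (A k j) = (if i != j then A i j else Some 0)).
Proof.
split=> [/pseudo_diagonalizable_potential [Afin Apot]|[Afin Acoc]].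
  by split; last exact: potential_cocycle.
by apply: potential_pseudo_diagonalizable; last exact: finite_cocycle_potential.
Qed.
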